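(* Let $P$ be a transition kernel on finite $\mathcal{S}$ with actions $\mathcal{A}$ admitting a linear feature representation $\phi:\mathcal{S}\times\mathcal{A}\to\mathbb{R}^K$. Let $\mathcal{K}=\{(s_k,a_k)\}\subset\mathcal{S}\times\mathcal{A}$ be a row basis index set of $\phi$, i.e. $\{\phi(s_k,a_k)\}_{k\in\mathcal{K}}$ is a basis of $\mathrm{span}\{\phi(s,a):(s,a)\in\mathcal{S}\times\mathcal{A}\}$. Then there exist coefficients $\{\lambda_k^{s,a}\}$ with $\phi(s,a)=\sum_{k\in\mathcal{K}}\lambda_k^{s,a}\phi(s_k,a_k)$ for all $(s,a)$, and the matrix $\widehat{P}(s'|s,a)=\sum_{k\in\mathcal{K}}\lambda_k^{s,a}\widehat{P}_\mathcal{K}(s'|s_k,a_k)$ satisfies: (1) $\widehat{P}(s'|s,a)$ is an unbiased estimate of $P(s'|s,a)$; (2) $\sum_{k\in\mathcal{K}}\lambda_k^{s,a}=1$ and $\sum_{s'}\widehat{P}(s'|s,a)=1$ for all $(s,a)$; (3) if $\lambda_k^{s,a}\ge0$ for all $k\in\mathcal{K}$ and all $(s,a)$, then $\widehat{P}(s'|s,a)\ge0$ for all $(s,a,s')$.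
   Context: $P$ admits a linear feature representation $\phi$ if $P(s'|s,a)=\sum_{k=1}^K\phi_k(s,a)\psi_k(s')$ for all $s,a,s'$, for some functions $\psi_k:\mathcal{S}\to\mathbb{R}$. For each $(s_k,a_k)\in\mathcal{K}$, $N$ i.i.d. samples are drawn from $P(\cdot|s_k,a_k)$ using a generative model, and $\widehat{P}_\mathcal{K}(s'|s_k,a_k)=\mathrm{count}(s_k,a_k,s')/N$, where $\mathrm{count}(s_k,a_k,s')$ is the number of these samples equal to $s'$. *)

From HB Require Import structures.
From mathcomp Require Import all_boot all_order all_algebra.
Set Implicit Arguments. Unset Strict Implicit. Unset Printing Implicit Defensive.
Import Order.TTheory GRing.Theory Num.Theory.
Local Open Scope ring_scope.

Section Defs.
Variables (R : realFieldType) (S A : finType).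

(* P s a s' = P(s'|s,a): a transition kernel *)
Definition is_transition_kernel (P : S -> A -> S -> R) : Prop :=
  (forall s a s', 0 <= P s a s') /\ (forall s a, \sum_(s' : S) P s a s' = 1).

Definition linear_feature_rep (d : nat) (P : S -> A -> S -> R)
    (phi : S -> A -> 'rV[R]_d) : Prop :=
  exists psi : 'I_d -> S -> R,
    forall s a s', P s a s' = \sum_(k < d) phi s a 0 k * psi k s'.

Definition feature_span (d : nat) (phi : S -> A -> 'rV[R]_d) : {vspace 'rV[R]_d} :=
  <<[seq phi p.1 p.2 | p : S * A]>>%VS.

Definition row_basis_index (d : nat) (phi : S -> A -> 'rV[R]_d) (K : {set S * A}) : Prop :=
  basis_of (feature_span phi) [seq phi p.1 p.2 | p <- enum K].

Definition Kidx (K : {set S * A}) : finType := {p : S * A | p \in K}.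

(* outcomes of the generative model: N samples for each (s_k,a_k) in K *)
Definition sample_space (K : {set S * A}) (N : nat) : finType :=
  {ffun Kidx K -> {ffun 'I_N -> S}}.

(* probability of an outcome: all samples independent, sample i of pair k
   distributed as P(.|s_k,a_k) *)
Definition sample_prob (P : S -> A -> S -> R) (K : {set S * A}) (N : nat)
    (w : sample_space K N) : R :=
  \prod_(k : Kidx K) \prod_(i < N) P (val k).1 (val k).2 (w k i).

Definition expect (P : S -> A -> S -> R) (K : {set S * A}) (N : nat)
    (X : sample_space K N -> R) : R :=
  \sum_(w : sample_space K N) sample_prob P w * X w.

Definition count_samples (K : {set S * A}) (N : nat) (w : sample_space K N)
    (k : Kidx K) (s' : S) : nat :=
  #|[set i : 'I_N | w k i == s']|.

Definition PK_hat (K : {set S * A}) (N : nat) (w : sample_space K N)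
    (k : Kidx K) (s' : S) : R :=
  (count_samples w k s')%:R / N%:R.

Definition P_hat (K : {set S * A}) (N : nat) (lam : S -> A -> S * A -> R)
    (w : sample_space K N) (s : S) (a : A) (s' : S) : R :=
  \sum_(k : Kidx K) lam s a (val k) * PK_hat w k s'.

End Defs.

(** The estimator is a fixed linear combination of empirical transition
    frequencies.  Each frequency is an average of indicators whose mean is the
    corresponding entry of [P], so by linearity of expectation [E P_hat] is
    [sum_k lam_k P(.|s_k,a_k)].  The linear feature representation transports
    the expansion [phi(s,a) = sum_k lam_k phi(s_k,a_k)] to the rows of [P],
    which gives unbiasedness; summing that identity over [s'] gives
    [sum_k lam_k = 1], and then [P_hat] has row sums [1] because every
    empirical distribution does. *)
From HB Require Import structures.
From mathcomp Require Import all_boot all_order all_algebra.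
Set Implicit Arguments. Unset Strict Implicit. Unset Printing Implicit Defensive.
Import Order.TTheory GRing.Theory Num.Theory.
Local Open Scope ring_scope.

Section SetCoordinates.
Variables (F : fieldType) (vT : vectType F) (T : finType).
Variables (K : {set T}) (f : T -> vT).

Definition set_coord_tuple : #|K|.-tuple vT := [tuple of map f (enum_tuple K)].

(* Coordinates along the family [f p], [p \in K], indexed by [p] itself; [0] outside [K]. *)
Definition set_coord (v : vT) (p : T) : F :=
  oapp (fun i => coord set_coord_tuple i v) 0 [pick i : 'I_#|K| | enum_val i == p].

Lemma set_coord_enum_val v i : set_coord v (enum_val i) = coord set_coord_tuple i v.
Proof.
rewrite /set_coord; case: pickP => [j /eqP/enum_val_inj -> //|].
by move=> /(_ i); rewrite eqxx.
Qed.

Lemma set_coord_span v :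
  v \in <<[seq f p | p <- enum K]>>%VS -> v = \sum_(p in K) set_coord v p *: f p.
Proof.
move=> v_span; rewrite big_enum_val {1}(coord_span v_span).
apply: eq_bigr => i _; rewrite set_coord_enum_val -tnth_nth tnth_map.
by rewrite (tnth_nth (enum_val i)) -enum_val_nth.
Qed.

End SetCoordinates.

Section LinearKernel.
Variables (R : realFieldType) (S A : finType) (d : nat).
Variables (P : S -> A -> S -> R) (phi : S -> A -> 'rV[R]_d).

Lemma linear_feature_rep_comb (K : {set S * A}) (c : S * A -> R) s a s' :
  linear_feature_rep P phi ->
  phi s a = \sum_(p in K) c p *: phi p.1 p.2 ->
  P s a s' = \sum_(p in K) c p * P p.1 p.2 s'.
Proof.
move=> [psi P_psi] phi_comb; rewrite P_psi phi_comb.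
under eq_bigr => k _ do rewrite summxE big_distrl.
rewrite exchange_big; apply: eq_bigr => p _.
by rewrite P_psi big_distrr /=; apply: eq_bigr => k _; rewrite mxE mulrA.
Qed.

Lemma kernel_comb_sum1 (K : {set S * A}) (c : S * A -> R) s a :
  (forall s a, \sum_(s' : S) P s a s' = 1) ->
  (forall s', P s a s' = \sum_(p in K) c p * P p.1 p.2 s') ->
  \sum_(p in K) c p = 1.
Proof.
move=> P_sum1 P_comb; rewrite -(P_sum1 s a).
under [RHS]eq_bigr => s' _ do rewrite P_comb.
by rewrite exchange_big; apply: eq_bigr => p _; rewrite -big_distrr /= P_sum1 mulr1.
Qed.

End LinearKernel.

Lemma sum_ffun2_prod (R : comPzSemiRingType) (I J T : finType)
    (G : I -> J -> T -> R) :
  \sum_(w : {ffun I -> {ffun J -> T}}) \prod_i \prod_j G i j (w i j) =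
  \prod_i \prod_j \sum_x G i j x.
Proof.
under [RHS]eq_bigr => i _ do rewrite bigA_distr_bigA.
by rewrite bigA_distr_bigA.
Qed.

Section GenerativeModel.
Variables (R : realFieldType) (S A : finType) (P : S -> A -> S -> R).
Variables (K : {set S * A}) (N : nat).
Hypothesis P_sum1 : forall s a, \sum_(s' : S) P s a s' = 1.

Notation Pk k := (P (val k).1 (val k).2).

Lemma eq_expect (X Y : sample_space K N -> R) :
  X =1 Y -> expect P X = expect P Y.
Proof. by move=> XY; apply: eq_bigr => w _; rewrite XY. Qed.

Lemma expectZ c (X : sample_space K N -> R) :
  expect P (fun w => c * X w) = c * expect P X.
Proof. by rewrite /expect big_distrr; apply: eq_bigr => w _; rewrite mulrCA. Qed.

Lemma expect_sum (I : finType) (X : I -> sample_space K N -> R) :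
  expect P (fun w => \sum_i X i w) = \sum_i expect P (X i).
Proof.
rewrite /expect; under eq_bigr => w _ do rewrite big_distrr.
exact: exchange_big.
Qed.

(* The other samples integrate out because every row of [P] sums to [1]. *)
Lemma expect_sample (k0 : Kidx K) (i0 : 'I_N) (g : S -> R) :
  expect P (fun w => g (w k0 i0)) = \sum_(x : S) Pk k0 x * g x.
Proof.
pose G k i x := Pk k x * (if (k == k0) && (i == i0) then g x else 1).
have G_other k i : ~~ ((k == k0) && (i == i0)) -> \sum_x G k i x = 1.
  move=> /negbTE ne; rewrite -(P_sum1 (val k).1 (val k).2).
  by apply: eq_bigr => x _; rewrite /G ne mulr1.
have others_k0 : \prod_(i < N | i != i0) \sum_x G k0 i x = 1.
  by apply: big1 => i ne; rewrite G_other // eqxx.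
have others : \prod_(k | k != k0) \prod_(i < N) \sum_x G k i x = 1.
  by apply: big1 => k ne; apply: big1 => i _; rewrite G_other // (negbTE ne).
transitivity (\prod_k \prod_i \sum_x G k i x); last first.
  rewrite (bigD1 k0) //= (bigD1 i0) //= others_k0 others !mulr1.
  by apply: eq_bigr => x _; rewrite /G !eqxx.
rewrite -sum_ffun2_prod; apply: eq_bigr => w _; rewrite /sample_prob.
rewrite (bigD1 k0) //= [RHS](bigD1 k0) //= (bigD1 i0) //= [in RHS](bigD1 i0) //=.
rewrite [in RHS](eq_bigr (fun i => Pk k0 (w k0 i))) => [|i /negbTE ne]; last first.
  by rewrite /G eqxx ne mulr1.
rewrite [in RHS](eq_bigr (fun k => \prod_i Pk k (w k i))) => [|k /negbTE ne]; last first.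
  by apply: eq_bigr => i _; rewrite /G ne mulr1.
by rewrite /G !eqxx [LHS]mulrAC [X in X * _ = _]mulrAC.
Qed.

Lemma expect_sample_eq k i s' :
  expect P (fun w : sample_space K N => ((w k i == s')%:R : R)) = Pk k s'.
Proof.
rewrite (expect_sample k i (fun x => (x == s')%:R)) (bigD1 s') //= eqxx mulr1.
by rewrite big1 ?addr0 // => x /negbTE ->; rewrite mulr0.
Qed.

Lemma count_samplesE (w : sample_space K N) k s' :
  (count_samples w k s')%:R = \sum_(i < N) ((w k i == s')%:R : R).
Proof.
rewrite /count_samples -sum1_card natr_sum big_mkcond /=.
by apply: eq_bigr => i _; rewrite inE; case: (w k i == s').
Qed.

Hypothesis N_gt0 : (0 < N)%N.

Lemma expect_PK_hat k s' :
  expect P (fun w : sample_space K N => PK_hat R w k s') = Pk k s'.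
Proof.
pose avg (w : sample_space K N) := N%:R^-1 * \sum_(i < N) ((w k i == s')%:R : R).
rewrite (@eq_expect _ avg); last first.
  by move=> w; rewrite /avg /PK_hat count_samplesE mulrC.
rewrite expectZ expect_sum.
under eq_bigr => i _ do rewrite expect_sample_eq.
by rewrite sumr_const card_ord -[X in _ * X]mulr_natl mulKf ?pnatr_eq0 -?lt0n.
Qed.

Lemma PK_hat_sum1 (w : sample_space K N) k : \sum_(s' : S) PK_hat R w k s' = 1.
Proof.
rewrite /PK_hat -big_distrl /=.
under eq_bigr => s' _ do rewrite count_samplesE.
rewrite exchange_big /= (eq_bigr (fun=> 1)) => [|i _].
  by rewrite sumr_const card_ord mulfV ?pnatr_eq0 -?lt0n.
rewrite (bigD1 (w k i)) //= eqxx big1 ?addr0 // => x.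
by rewrite eq_sym => /negbTE ->.
Qed.

Lemma PK_hat_ge0 (w : sample_space K N) k s' : 0 <= PK_hat R w k s'.
Proof. by rewrite divr_ge0 ?ler0n. Qed.

Variable lam : S -> A -> S * A -> R.

Lemma expect_P_hat s a s' :
  expect P (fun w : sample_space K N => P_hat lam w s a s') =
  \sum_(p in K) lam s a p * P p.1 p.2 s'.
Proof.
rewrite /P_hat (expect_sum (fun k w => lam s a (val k) * PK_hat R w k s')).
rewrite [RHS]big_sub; apply: eq_bigr => k _.
by rewrite expectZ expect_PK_hat.
Qed.

Lemma P_hat_sum (w : sample_space K N) s a :
  \sum_(s' : S) P_hat lam w s a s' = \sum_(p in K) lam s a p.
Proof.
rewrite exchange_big [RHS]big_sub; apply: eq_bigr => k _.
by rewrite -big_distrr /= PK_hat_sum1 mulr1.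
Qed.

Lemma P_hat_ge0 (w : sample_space K N) s a s' :
  (forall p, p \in K -> 0 <= lam s a p) -> 0 <= P_hat lam w s a s'.
Proof.
move=> lam_ge0; apply: sumr_ge0 => k _.
by rewrite mulr_ge0 ?PK_hat_ge0 ?lam_ge0 ?(valP k).
Qed.

End GenerativeModel.

Theorem proposition1 (R : realFieldType) (S A : finType) (d : nat)
    (P : S -> A -> S -> R) (phi : S -> A -> 'rV[R]_d)
    (K : {set S * A}) (N : nat) :
  is_transition_kernel P ->
  linear_feature_rep P phi ->
  row_basis_index phi K ->
  (0 < N)%N ->
  exists lam : S -> A -> S * A -> R,
    (forall s a, phi s a = \sum_(p in K) lam s a p *: phi p.1 p.2) /\
    (* (1) unbiasedness *)
    (forall s a s',
        expect P (fun w : sample_space K N => P_hat lam w s a s') = P s a s') /\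
    (* (2) *)
    (forall s a, \sum_(p in K) lam s a p = 1) /\
    (forall (w : sample_space K N) s a, \sum_(s' : S) P_hat lam w s a s' = 1) /\
    (* (3) *)
    ((forall s a p, p \in K -> 0 <= lam s a p) ->
       forall (w : sample_space K N) s a s', 0 <= P_hat lam w s a s').
Proof.
move=> [_ P_sum1] P_rep K_basis N_gt0.
pose lam s a := set_coord K (fun p => phi p.1 p.2) (phi s a).
have phi_comb s a : phi s a = \sum_(p in K) lam s a p *: phi p.1 p.2.
  apply: set_coord_span; rewrite (span_basis K_basis).
  by apply: memv_span; apply/mapP; exists (s, a); rewrite ?mem_enum.
have P_comb s a s' := linear_feature_rep_comb s' P_rep (phi_comb s a).
have lam_sum1 s a := kernel_comb_sum1 P_sum1 (P_comb s a).
exists lam; split; first exact: phi_comb.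
split=> [s a s'|]; first by rewrite expect_P_hat // [RHS]P_comb.
split; first exact: lam_sum1.
split=> [w s a|lam_ge0 w s a s']; first by rewrite P_hat_sum.
by apply: P_hat_ge0 => p; apply: lam_ge0.
Qed.
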